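(* Let $\mathcal{A}$ be a complete deterministic timed automaton (CTA). All invalid reset-clocked words of $\mathcal{A}$ belong to the same equivalence class of $\sim_{\mathscr{L}_r(\mathcal{A})}$; that is, for any two reset-clocked words $\gamma_{r1},\gamma_{r2}$ that are not valid for $\mathcal{A}$, $\gamma_{r1}\sim_{\mathscr{L}_r(\mathcal{A})}\gamma_{r2}$.
   Context: Let $\Sigma$ be a finite alphabet and $\mathcal{C}=\{c_1,\dots,c_m\}$ a finite set of clocks. A clock constraint is a finite conjunction of atomic constraints $c\sim k$ ($c\in\mathcal{C}$, $k\in\mathbb{N}$, ${\sim}\in\{<,\le,=,\ge,>\}$). A timed automaton is $\mathcal{A}=(\Sigma,L,l_0,F,\mathcal{C},\Delta)$ with finite location set $L$, initial $l_0$, accepting $F\subseteq L$, transitions $\Delta\subseteq L\times\Sigma\times\Phi(\mathcal{C})\times2^{\mathcal{C}}\times L$. A run over a delay-timed word $(\sigma_1,t_1)\cdots(\sigma_n,t_n)$ is $(l_0,\nu_0)\xrightarrow{t_1,\sigma_1}\cdots\xrightarrow{t_n,\sigma_n}(l_n,\nu_n)$ with $\nu_0\equiv0$ and transitions $(l_{i-1},\sigma_i,\phi_i,\mathcal{B}_i,l_i)\in\Delta$ with $\nu_{i-1}+t_i$ satisfying $\phi_i$ and $\nu_i$ obtained from $\nu_{i-1}+t_i$ by setting clocks in $\mathcal{B}_i$ to $0$; accepting if $l_n\in F$. $\mathcal{A}$ is a CTA if every delay-timed word has exactly one run. The reset-clocked word of the run is $(\sigma_1,\mathbf{v}_1,\mathbf{b}_1)\cdots(\sigma_n,\mathbf{v}_n,\mathbf{b}_n)$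 with $\mathbf{v}_i=\nu_{i-1}+t_i\in\mathbb{R}_{\ge0}^m$ and $\mathbf{b}_{i,j}=\top$ iff $c_j\in\mathcal{B}_i$ (else $\bot$). $\mathscr{L}_r(\mathcal{A})$ is the set of reset-clocked words of accepting runs. A reset-clocked word (any element of $(\Sigma\times\mathbb{R}_{\ge0}^m\times\{\top,\bot\}^m)^*$) is valid for $\mathcal{A}$ if it is the reset-clocked word of some run of $\mathcal{A}$, invalid otherwise. $resets(\cdot)$ returns $\mathbf{b}_1,\dots,\mathbf{b}_n$; $vw(\cdot)$ drops resets. Regions: with $\kappa(c)$ the largest integer in guards of $\mathcal{A}$ over $c$, valuations $\nu,\nu'$ are region-equivalent iff (i) for all $c$, $\lfloor\nu(c)\rfloor=\lfloor\nu'(c)\rfloor$ or both exceed $\kappa(c)$; (ii) for $c$ with $\nu(c)\le\kappa(c)$, $\mathrm{frac}(\nu(c))=0$ iff $\mathrm{frac}(\nu'(c))=0$; (iii) for $c_i,c_j$ with $\nu(c_i)\le\kappa(c_i),\nu(c_j)\le\kappa(c_j)$, $\mathrm{frac}(\nu(c_i))\le\mathrm{frac}(\nu(c_j))$ iff $\mathrm{frac}(\nu'(c_i))\le\mathrm{frac}(\nu'(c_j))$. A region word is a finite sequence of pairs $(\sigma,R)$ with $R$ a region; a clocked word maps componentwise to its region word $\llbracket\cdot\rrbracket$. $\mathit{vs}_{\mathcal{A}}(\gamma_r,\xi)$ is the set of reset-clocked $\gamma_r'$ with $\llbracket vw(\gamma_r')\rrbracket=\xi$ and $\gamma_r\gamma_r'$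 valid for $\mathcal{A}$. $\gamma_{r1}\sim_{\mathscr{L}_r(\mathcal{A})}\gamma_{r2}$ holds iff for every region word $\xi$ and all $\gamma_{r1}'\in\mathit{vs}_{\mathcal{A}}(\gamma_{r1},\xi)$, $\gamma_{r2}'\in\mathit{vs}_{\mathcal{A}}(\gamma_{r2},\xi)$: $\gamma_{r1}\gamma_{r1}'\in\mathscr{L}_r(\mathcal{A})$ iff $\gamma_{r2}\gamma_{r2}'\in\mathscr{L}_r(\mathcal{A})$, and $resets(\gamma_{r1}')=resets(\gamma_{r2}')$. *)

From Stdlib Require Import Reals.
From mathcomp Require Import ssreflect ssrfun ssrbool eqtype ssrnat seq fintype finset.

Set Implicit Arguments.
Unset Strict Implicit.
Unset Printing Implicit Defensive.

Local Open Scope R_scope.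

Inductive cmp := CLt | CLe | CEq | CGe | CGt.

Section TA.
Variables (Sigma L : finType) (m : nat).

Definition valuation := 'I_m -> R.

Record atom := Atom { a_clock : 'I_m; a_cmp : cmp; a_const : nat }.

Definition guard := seq atom.

Definition sat_atom (a : atom) (v : valuation) : Prop :=
  let x := v (a_clock a) in let k := INR (a_const a) in
  match a_cmp a with
  | CLt => x < k | CLe => x <= k | CEq => x = k | CGe => x >= k | CGt => x > k
  end.

Definition sat (g : guard) (v : valuation) : Prop :=
  forall a, List.In a g -> sat_atom a v.

Record trans := Trans {
  t_src : L; t_lab : Sigma; t_grd : guard; t_rst : {set 'I_m}; t_dst : L }.

(* timed automaton (Sigma, L, l0, F, C, Delta); Delta is a finite set of transitions *)
Record TA := MkTA { l0 : L; accF : {set L}; Delta : seq trans }.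

Definition vzero : valuation := fun _ => 0.
Definition vdelay (v : valuation) (t : R) : valuation := fun c => v c + t.
Definition vreset (B : {set 'I_m}) (v : valuation) : valuation :=
  fun c => if c \in B then 0 else v c.

Definition delay_word := seq (Sigma * R).
Definition is_delay_word (w : delay_word) : Prop := forall p, List.In p w -> 0 <= p.2.

Fixpoint run_from (A : TA) (l : L) (v : valuation) (w : delay_word) (ds : seq trans)
  : Prop :=
  match w, ds with
  | [::], [::] => True
  | (s, t) :: w', d :: ds' =>
      List.In d (Delta A) /\ t_src d = l /\ t_lab d = s /\
      sat (t_grd d) (vdelay v t) /\
      run_from A (t_dst d) (vreset (t_rst d) (vdelay v t)) w' ds'
  | _, _ => False
  end.

Definition is_run (A : TA) (w : delay_word) (ds : seq trans) : Prop :=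
  run_from A (l0 A) vzero w ds.

Definition last_loc (A : TA) (ds : seq trans) : L := last (l0 A) (map t_dst ds).

(* complete deterministic timed automaton: every delay-timed word has exactly one run *)
Definition is_CTA (A : TA) : Prop :=
  forall w, is_delay_word w -> exists! ds, is_run A w ds.

(* reset-clocked words: elements of (Sigma x R^m x {T,F}^m)^* *)
Definition rc_letter := (Sigma * valuation * ('I_m -> bool))%type.
Definition rc_word := seq rc_letter.

Fixpoint rcw_from (v : valuation) (w : delay_word) (ds : seq trans) : rc_word :=
  match w, ds with
  | (s, t) :: w', d :: ds' =>
      (s, vdelay v t, fun j => j \in t_rst d)
        :: rcw_from (vreset (t_rst d) (vdelay v t)) w' ds'
  | _, _ => [::]
  end.

Definition rcw (w : delay_word) (ds : seq trans) : rc_word := rcw_from vzero w ds.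

Definition valid (A : TA) (g : rc_word) : Prop :=
  exists w ds, is_delay_word w /\ is_run A w ds /\ rcw w ds = g.

Definition Lr (A : TA) (g : rc_word) : Prop :=
  exists w ds, is_delay_word w /\ is_run A w ds /\ last_loc A ds \in accF A /\
               rcw w ds = g.

Definition resets (g : rc_word) : seq ('I_m -> bool) := map (fun x => x.2) g.
Definition vw (g : rc_word) : seq (Sigma * valuation) := map (fun x => x.1) g.

(* kappa(c): largest integer in guards of A over c (0 if none) *)
Definition kappa (A : TA) (c : 'I_m) : nat :=
  foldr maxn 0%N [seq a_const a | a <- flatten (map t_grd (Delta A)) & a_clock a == c].

Definition region_equiv (A : TA) (v v' : valuation) : Prop :=
  (forall c, Int_part (v c) = Int_part (v' c) \/
             (v c > INR (kappa A c) /\ v' c > INR (kappa A c))) /\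
  (forall c, v c <= INR (kappa A c) ->
             (frac_part (v c) = 0 <-> frac_part (v' c) = 0)) /\
  (forall ci cj, v ci <= INR (kappa A ci) -> v cj <= INR (kappa A cj) ->
             (frac_part (v ci) <= frac_part (v cj) <->
              frac_part (v' ci) <= frac_part (v' cj))).

Definition nonneg (v : valuation) : Prop := forall c, 0 <= v c.

Definition region_of (A : TA) (v : valuation) : valuation -> Prop :=
  fun v' => nonneg v' /\ region_equiv A v v'.

Definition is_region (A : TA) (Rg : valuation -> Prop) : Prop :=
  exists v, nonneg v /\ Rg = region_of A v.

Definition region_word := seq (Sigma * (valuation -> Prop)).

Definition is_region_word (A : TA) (xi : region_word) : Prop :=
  forall p, List.In p xi -> is_region A p.2.

Definition to_region_word (A : TA) (cw : seq (Sigma * valuation)) : region_word :=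
  map (fun x => (x.1, region_of A x.2)) cw.

Definition vs (A : TA) (g : rc_word) (xi : region_word) (g' : rc_word) : Prop :=
  to_region_word A (vw g') = xi /\ valid A (g ++ g').

Definition rc_equiv (A : TA) (g1 g2 : rc_word) : Prop :=
  forall xi, is_region_word A xi ->
  forall g1' g2', vs A g1 xi g1' -> vs A g2 xi g2' ->
    (Lr A (g1 ++ g1') <-> Lr A (g2 ++ g2')) /\ resets g1' = resets g2'.

End TA.

From mathcomp Require Import ssreflect ssrfun ssrbool eqtype ssrnat seq fintype.

Set Implicit Arguments.
Unset Strict Implicit.
Unset Printing Implicit Defensive.

(* Validity is closed under prefixes, since a prefix of a run is a run. Hence an
   invalid word has no valid extension at all, so vs_A(g, xi) is empty for every
   region word xi and the defining condition of ~_{L_r(A)} holds vacuously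
   between any two invalid words. *)

Lemma In_take (T : Type) (s : seq T) n x : List.In x (take n s) -> List.In x s.
Proof.
elim: s n => [|y s IHs] [|n] //= [->|x_in]; first by left.
by right; apply: (IHs n).
Qed.

Section Prefixes.

Variables (Sigma L : finType) (m : nat) (A : TA Sigma L m).

Lemma is_delay_word_take (w : delay_word Sigma) n :
  is_delay_word w -> is_delay_word (take n w).
Proof. by move=> w_ok p p_in; apply: w_ok; apply: In_take p_in. Qed.

Lemma run_from_take l v (w : delay_word Sigma) ds n :
  run_from A l v w ds -> run_from A l v (take n w) (take n ds).
Proof.
elim: w l v ds n => [|[s t] w IHw] l v [|d ds] [|n] //= [? [? [? [? run]]]].
by do 4!split=> //; apply: IHw.
Qed.

Lemma rcw_from_take (v : valuation m) (w : delay_word Sigma)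
    (ds : seq (trans Sigma L m)) n :
  rcw_from v (take n w) (take n ds) = take n (rcw_from v w ds).
Proof.
by elim: w v ds n => [|[s t] w IHw] v [|d ds] [|n] //=; rewrite IHw.
Qed.

Lemma valid_prefix (g g' : rc_word Sigma m) : valid A (g ++ g') -> valid A g.
Proof.
move=> [w [ds [w_ok [run rcw_eq]]]].
exists (take (size g) w), (take (size g) ds); split; last split.
- exact: is_delay_word_take.
- exact: run_from_take.
- by rewrite /rcw rcw_from_take -/(rcw w ds) rcw_eq take_size_cat.
Qed.

Lemma vs_invalid (g : rc_word Sigma m) xi g' : ~ valid A g -> ~ vs A g xi g'.
Proof. by move=> g_invalid [_ /valid_prefix]. Qed.

End Prefixes.

Theorem lemma3p9 (Sigma L : finType) (m : nat) (A : TA Sigma L m) :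
  is_CTA A ->
  forall g1 g2 : rc_word Sigma m,
    ~ valid A g1 -> ~ valid A g2 -> rc_equiv A g1 g2.
Proof.
move=> _ g1 g2 g1_invalid _ xi _ g1' g2' g1'_vs _.
by case: (vs_invalid g1_invalid g1'_vs).
Qed.
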